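(* Let $x,z\in\mathbb{R}^n$ be nonzero with $xx^T\neq zz^T$. Define $\theta\in[0,\pi/2]$ by $$\cos\theta=\max_{y\in\mathbb{R}^n,\ \mathbf{X}y\neq0}\frac{e^T\mathbf{X}y}{\|e\|\,\|\mathbf{X}y\|}.$$ Then $$\sin\theta=\frac{(\|z\|\sin\phi)^2}{\|e\|}=\frac{\sin^2\phi}{\sqrt{(\rho^2-1)^2+2\rho^2\sin^2\phi}}.$$
   Context: $\rho=\|x\|/\|z\|$ and $\phi=\arccos\big(x^Tz/(\|x\|\|z\|)\big)\in[0,\pi]$. $\mathrm{vec}$ is column-stacking vectorization; $e=\mathrm{vec}(xx^T-zz^T)\in\mathbb{R}^{n^2}$ (so $\|e\|=\|xx^T-zz^T\|_F$), and $\mathbf{X}\in\mathbb{R}^{n^2\times n}$ is the matrix with $\mathbf{X}u=\mathrm{vec}(xu^T+ux^T)$ for all $u\in\mathbb{R}^n$. *)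

From Stdlib Require Import Reals Lra.
Open Scope R_scope.

(* Vectors in R^n are modelled as functions nat -> R; only indices < n matter. *)
Fixpoint rsum (n : nat) (f : nat -> R) : R :=
  match n with
  | O => 0
  | S m => rsum m f + f m
  end.

Definition dot (n : nat) (u v : nat -> R) : R := rsum n (fun i => u i * v i).
Definition norm (n : nat) (u : nat -> R) : R := sqrt (dot n u u).

Definition vzero (n : nat) (u : nat -> R) : Prop := forall i, (i < n)%nat -> u i = 0.

(* n x n matrices as functions nat -> nat -> R (row i, column j). *)
(* Column-stacking vectorization: entry (i,j) goes to index i + n*j. *)
Definition vec (n : nat) (M : nat -> nat -> R) : nat -> R :=
  fun k => M (k mod n)%nat (k / n)%nat.

Definition outer (u v : nat -> R) : nat -> nat -> R := fun i j => u i * v j.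

Definition evec (n : nat) (x z : nat -> R) : nat -> R :=
  vec n (fun i j => outer x x i j - outer z z i j).

Definition Xop (n : nat) (x u : nat -> R) : nat -> R :=
  vec n (fun i j => outer x u i j + outer u x i j).

Definition is_max {A : Type} (P : A -> Prop) (f : A -> R) (m : R) : Prop :=
  (exists y, P y /\ f y = m) /\ (forall y, P y -> f y <= m).

Definition ratio (n : nat) (x z y : nat -> R) : R :=
  dot (n * n) (evec n x z) (Xop n x y) /
    (norm (n * n) (evec n x z) * norm (n * n) (Xop n x y)).

Definition rho (n : nat) (x z : nat -> R) : R := norm n x / norm n z.
Definition phi (n : nat) (x z : nat -> R) : R :=
  acos (dot n x z / (norm n x * norm n z)).

(* Split z = a x + w with a = <x,z>/|x|^2 and w orthogonal to x. Then
   x x^T - z z^T = X y* - w w^T for an explicit y*, and w w^T is orthogonal to the range of X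
   because <w w^T, x y^T + y x^T> = 2 <w,x> <w,y> = 0. Hence X y* is the orthogonal projection
   of e onto the range of X, cos theta = |X y*| / |e| and sin theta = |w w^T| / |e| = |w|^2 / |e|,
   where |w|^2 = |z|^2 sin^2 phi. Finally |e|^2 = |x|^4 - 2 <x,z>^2 + |z|^4
   = |z|^4 ((rho^2 - 1)^2 + 2 rho^2 sin^2 phi). *)

From Stdlib Require Import Reals Lra Lia Psatz Classical.
Open Scope R_scope.

Lemma rsum_ext N f g : (forall i, (i < N)%nat -> f i = g i) -> rsum N f = rsum N g.
Proof.
  induction N as [|N IH]; intros Hfg; simpl; [reflexivity|].
  rewrite IH by (intros; apply Hfg; lia).
  rewrite Hfg by lia; reflexivity.
Qed.

Lemma rsum_lin N a b f g :
  rsum N (fun i => a * f i + b * g i) = a * rsum N f + b * rsum N g.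
Proof. induction N as [|N IH]; simpl; [ring|rewrite IH; ring]. Qed.

Lemma rsum_scal N a f : rsum N (fun i => a * f i) = a * rsum N f.
Proof. induction N as [|N IH]; simpl; [ring|rewrite IH; ring]. Qed.

Lemma rsum_ge0 N f : (forall i, (i < N)%nat -> 0 <= f i) -> 0 <= rsum N f.
Proof.
  induction N as [|N IH]; intros Hf; simpl; [lra|].
  assert (0 <= rsum N f) by (apply IH; intros; apply Hf; lia).
  assert (0 <= f N) by (apply Hf; lia).
  lra.
Qed.

Lemma rsum_add_range a b f : rsum (a + b) f = rsum a f + rsum b (fun i => f (a + i)%nat).
Proof.
  induction b as [|b IH]; simpl; [rewrite Nat.add_0_r; ring|].
  rewrite Nat.add_succ_r; simpl; rewrite IH; ring.
Qed.

Lemma rsum_vec n m g : (0 < n)%nat ->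
  rsum (m * n) (fun k => g (k mod n)%nat (k / n)%nat) = rsum m (fun j => rsum n (fun i => g i j)).
Proof.
  intros Hn; induction m as [|m IH]; simpl; [reflexivity|].
  rewrite Nat.add_comm, rsum_add_range, IH; f_equal.
  apply rsum_ext; intros i Hi.
  replace (m * n + i)%nat with (i + m * n)%nat by lia.
  rewrite Nat.Div0.mod_add, Nat.div_add, Nat.mod_small, Nat.div_small by lia.
  reflexivity.
Qed.

Lemma dot_ext N f f' g g' :
  (forall k, f k = f' k) -> (forall k, g k = g' k) -> dot N f g = dot N f' g'.
Proof. intros Hf Hg; apply rsum_ext; intros k _; rewrite Hf, Hg; reflexivity. Qed.

Lemma dot_sym N u v : dot N u v = dot N v u.
Proof. apply rsum_ext; intros; ring. Qed.

Lemma dot_lin_l N a b f g h :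
  dot N (fun k => a * f k + b * g k) h = a * dot N f h + b * dot N g h.
Proof. unfold dot; rewrite <- rsum_lin; apply rsum_ext; intros; ring. Qed.

Lemma dot_lin_r N a b f g h :
  dot N h (fun k => a * f k + b * g k) = a * dot N h f + b * dot N h g.
Proof. rewrite dot_sym, dot_lin_l, (dot_sym N f), (dot_sym N g); reflexivity. Qed.

Lemma dot_ge0 N u : 0 <= dot N u u.
Proof. apply rsum_ge0; intros; nra. Qed.

Lemma dot_gt0 N u : ~ vzero N u -> 0 < dot N u u.
Proof.
  unfold dot, vzero; induction N as [|N IH]; intros Hu; simpl.
  - exfalso; apply Hu; intros; lia.
  - assert (0 <= rsum N (fun i => u i * u i)) by (apply rsum_ge0; intros; nra).
    destruct (Req_dec (u N) 0) as [Hz|Hz]; [|nra].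
    enough (0 < rsum N (fun i => u i * u i)) by nra.
    apply IH; intros H0; apply Hu; intros i Hi.
    destruct (Nat.eq_dec i N) as [->|]; [exact Hz|apply H0; lia].
Qed.

Lemma dot_vzero_l N u v : vzero N u -> dot N u v = 0.
Proof.
  intros Hu; unfold dot; rewrite <- (Rmult_0_l (rsum N v)), <- rsum_scal.
  apply rsum_ext; intros i Hi; rewrite Hu by exact Hi; ring.
Qed.

Lemma dot_self_eq0 N u : dot N u u = 0 -> vzero N u.
Proof. intros H0; apply NNPP; intros Hu; pose proof (dot_gt0 N u Hu); lra. Qed.

Lemma dot_pythagoras N e p q :
  (forall k, e k = p k - q k) -> dot N q p = 0 -> dot N e e = dot N p p + dot N q q.
Proof.
  intros He Hpq.
  rewrite (dot_ext N e (fun k => 1 * p k + (-1) * q k) e (fun k => 1 * p k + (-1) * q k))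
    by (intros; rewrite He; ring).
  rewrite dot_lin_l, !dot_lin_r, (dot_sym N p q), Hpq; ring.
Qed.

(* With [A = <u,v>] and [B = <v,v>]: [0 <= |B u - A v|^2 = B (B <u,u> - A^2)]. *)
Lemma dot_sq_le N u v : dot N u v ^ 2 <= dot N u u * dot N v v.
Proof.
  destruct (Req_dec (dot N v v) 0) as [Hv|Hv].
  - rewrite dot_sym, dot_vzero_l by (apply dot_self_eq0; exact Hv); nra.
  - pose proof (dot_ge0 N u); pose proof (dot_ge0 N v).
    pose proof (dot_ge0 N (fun k => dot N v v * u k + (- dot N u v) * v k)) as Hq.
    rewrite dot_lin_l, !dot_lin_r, (dot_sym N v u) in Hq.
    assert (0 < dot N v v) by lra.
    nra.
Qed.

Lemma norm_ge0 N u : 0 <= norm N u.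
Proof. apply sqrt_pos. Qed.

Lemma norm_sq N u : norm N u ^ 2 = dot N u u.
Proof. apply pow2_sqrt, dot_ge0. Qed.

Lemma norm_gt0 N u : ~ vzero N u -> 0 < norm N u.
Proof. intros Hu; apply sqrt_lt_R0, dot_gt0, Hu. Qed.

Lemma dot_le_norm N u v : dot N u v <= norm N u * norm N v.
Proof.
  pose proof (dot_sq_le N u v) as Hcs.
  pose proof (norm_ge0 N u); pose proof (norm_ge0 N v).
  rewrite <- (norm_sq N u), <- (norm_sq N v) in Hcs.
  assert (0 <= norm N u * norm N v) by (apply Rmult_le_pos; assumption).
  destruct (Rle_dec (dot N u v) (norm N u * norm N v)); [assumption|nra].
Qed.

Lemma is_max_unique {A : Type} (P : A -> Prop) (f : A -> R) m m' :
  is_max P f m -> is_max P f m' -> m = m'.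
Proof.
  intros [[y [Py fy]] ub] [[y' [Py' fy']] ub'].
  apply Rle_antisym; [rewrite <- fy; apply ub'|rewrite <- fy'; apply ub]; assumption.
Qed.

(* As [q] is orthogonal to the range of [V], [<e, V y> = <V ystar, V y>]: Cauchy-Schwarz
   bounds the ratio by [|V ystar| / |e|], and [y = ystar] attains it (any [y] does if [V ystar = 0]). *)
Lemma is_max_cos_angle_range {A : Type} N (V : A -> nat -> R) e q ystar y0 :
  ~ vzero N e -> ~ vzero N (V y0) ->
  (forall k, e k = V ystar k - q k) -> (forall y, dot N q (V y) = 0) ->
  is_max (fun y => ~ vzero N (V y)) (fun y => dot N e (V y) / (norm N e * norm N (V y)))
    (norm N (V ystar) / norm N e).
Proof.
  intros He Hy0 Hdec Horth.
  assert (Hproj : forall y, dot N e (V y) = dot N (V ystar) (V y)).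
  { intros y.
    rewrite (dot_ext N e (fun k => 1 * V ystar k + (-1) * q k) (V y) (V y))
      by (intros; try rewrite Hdec; ring).
    rewrite dot_lin_l, Horth; ring. }
  pose proof (norm_gt0 N e He) as Hne.
  split.
  - destruct (classic (vzero N (V ystar))) as [Hs|Hs].
    + exists y0; split; [exact Hy0|].
      rewrite Hproj; unfold norm at 3; rewrite !dot_vzero_l, sqrt_0 by exact Hs.
      unfold Rdiv; ring.
    + exists ystar; split; [exact Hs|].
      pose proof (norm_gt0 N (V ystar) Hs).
      rewrite Hproj, <- norm_sq; field; lra.
  - intros y Hy; pose proof (norm_gt0 N (V y) Hy).
    rewrite Hproj.
    replace (norm N (V ystar) / norm N e)
      with (norm N (V ystar) * norm N (V y) / (norm N e * norm N (V y))) by (field; lra).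
    apply Rmult_le_compat_r; [left; apply Rinv_0_lt_compat; nra|apply dot_le_norm].
Qed.

Lemma dot_vec_outer n u v p q :
  dot (n * n) (vec n (outer u v)) (vec n (outer p q)) = dot n u p * dot n v q.
Proof.
  destruct n as [|n']; [unfold dot; simpl; ring|].
  unfold dot, vec, outer.
  rewrite (rsum_vec (S n') (S n') (fun i j => u i * v j * (p i * q j))) by lia.
  rewrite <- rsum_scal.
  apply rsum_ext; intros j _.
  rewrite Rmult_comm, <- rsum_scal.
  apply rsum_ext; intros; ring.
Qed.

Lemma dot_vec_outer_Xop n x u v y :
  dot (n * n) (vec n (outer u v)) (Xop n x y) = dot n u x * dot n v y + dot n u y * dot n v x.
Proof.
  rewrite (dot_ext _ _ (vec n (outer u v)) _
             (fun k => 1 * vec n (outer x y) k + 1 * vec n (outer y x) k))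
    by (intros; unfold Xop, vec; ring).
  rewrite dot_lin_r, !dot_vec_outer; ring.
Qed.

Lemma Xop_self_nonzero n x : ~ vzero n x -> ~ vzero (n * n) (Xop n x x).
Proof.
  intros Hx H0.
  pose proof (dot_gt0 n x Hx).
  pose proof (dot_vzero_l _ _ (Xop n x x) H0) as Hz.
  rewrite (dot_ext _ _ (fun k => 2 * vec n (outer x x) k + 0 * vec n (outer x x) k) _ (Xop n x x))
    in Hz by (intros; unfold Xop, vec, outer; ring).
  rewrite dot_lin_l, !dot_vec_outer_Xop in Hz; nra.
Qed.

Lemma norm_vec_outer_self n u : norm (n * n) (vec n (outer u u)) = dot n u u.
Proof. unfold norm; rewrite dot_vec_outer; apply sqrt_square, dot_ge0. Qed.

Lemma dot_evec_self n x z :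
  dot (n * n) (evec n x z) (evec n x z) = dot n x x ^ 2 - 2 * dot n x z ^ 2 + dot n z z ^ 2.
Proof.
  rewrite (dot_ext _ (evec n x z) (fun k => 1 * vec n (outer x x) k + (-1) * vec n (outer z z) k)
             (evec n x z) (fun k => 1 * vec n (outer x x) k + (-1) * vec n (outer z z) k))
    by (intros; unfold evec, vec; ring).
  rewrite dot_lin_l, !dot_lin_r, !dot_vec_outer, (dot_sym n z x); ring.
Qed.

Lemma evec_nonzero n x z :
  (exists i j, (i < n)%nat /\ (j < n)%nat /\ outer x x i j <> outer z z i j) ->
  ~ vzero (n * n) (evec n x z).
Proof.
  intros [i [j [Hi [Hj Hij]]]] H0; apply Hij.
  specialize (H0 (i + j * n)%nat ltac:(nia)).
  unfold evec, vec in H0.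
  rewrite Nat.Div0.mod_add, Nat.div_add, Nat.mod_small, Nat.div_small in H0 by lia.
  simpl in H0; lra.
Qed.

Lemma evec_decomposition n x z a k :
  evec n x z k =
  Xop n x (fun i => (1 - a ^ 2) / 2 * x i - a * (z i - a * x i)) k
  - vec n (outer (fun i => z i - a * x i) (fun i => z i - a * x i)) k.
Proof. unfold evec, Xop, vec, outer; field. Qed.

Definition rejection (n : nat) (x z : nat -> R) : nat -> R :=
  fun i => z i - dot n x z / dot n x x * x i.

Lemma dot_rejection_l n x z : dot n x x <> 0 -> dot n x (rejection n x z) = 0.
Proof.
  intros Hx; unfold rejection.
  rewrite (dot_ext n x x _ (fun i => 1 * z i + (- (dot n x z / dot n x x)) * x i))
    by (intros; ring).
  rewrite dot_lin_r; field; exact Hx.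
Qed.

Lemma dot_rejection_self n x z :
  dot n x x <> 0 ->
  dot n (rejection n x z) (rejection n x z) = dot n z z - dot n x z ^ 2 / dot n x x.
Proof.
  intros Hx.
  pose proof (dot_rejection_l n x z Hx) as Horth.
  unfold rejection in *.
  rewrite (dot_ext n _ (fun i => 1 * z i + (- (dot n x z / dot n x x)) * x i) _
             (fun i => 1 * z i + (- (dot n x z / dot n x x)) * x i))
    by (intros; ring).
  rewrite dot_lin_l, !dot_lin_r, (dot_sym n z x); field; exact Hx.
Qed.

Lemma sin_of_cos_ratio theta p q r :
  0 <= theta <= PI -> 0 <= q -> 0 < r -> r ^ 2 = p ^ 2 + q ^ 2 ->
  cos theta = p / r -> sin theta = q / r.
Proof.
  intros Hth Hq Hr Hpyth Hcos.
  pose proof (sin_ge_0 theta ltac:(lra) ltac:(lra)) as Hs.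
  pose proof (sin2_cos2 theta) as H1; unfold Rsqr in H1; rewrite Hcos in H1.
  assert (Hqr : (q / r) ^ 2 = 1 - (p / r) ^ 2).
  { replace ((q / r) ^ 2) with ((r ^ 2 - p ^ 2) / r ^ 2) by (replace (r ^ 2 - p ^ 2) with (q ^ 2) by lra; field; lra).
    field; lra. }
  assert (Hsq : sin theta ^ 2 = (q / r) ^ 2) by (rewrite Hqr; simpl; lra).
  assert (0 <= q / r) by (unfold Rdiv; apply Rmult_le_pos; [lra|left; apply Rinv_0_lt_compat; lra]).
  nra.
Qed.

Lemma sin_acos_sq c : -1 <= c <= 1 -> sin (acos c) ^ 2 = 1 - c ^ 2.
Proof.
  intros Hc; rewrite sin_acos by exact Hc.
  rewrite pow2_sqrt; unfold Rsqr; [ring|nra].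
Qed.

Lemma rho_sq n x z : ~ vzero n z -> rho n x z ^ 2 = dot n x x / dot n z z.
Proof.
  intros Hz; pose proof (norm_gt0 n z Hz).
  unfold rho; rewrite <- !norm_sq; field; lra.
Qed.

Lemma sin_phi_sq n x z :
  ~ vzero n x -> ~ vzero n z ->
  sin (phi n x z) ^ 2 = 1 - dot n x z ^ 2 / (dot n x x * dot n z z).
Proof.
  intros Hx Hz.
  pose proof (norm_gt0 n x Hx); pose proof (norm_gt0 n z Hz).
  assert (Hc2 : (dot n x z / (norm n x * norm n z)) ^ 2
                = dot n x z ^ 2 / (dot n x x * dot n z z))
    by (rewrite <- !norm_sq; field; lra).
  assert (Hle : dot n x z ^ 2 / (dot n x x * dot n z z) <= 1).
  { pose proof (dot_sq_le n x z); pose proof (dot_gt0 n x Hx); pose proof (dot_gt0 n z Hz).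
    apply Rmult_le_reg_r with (dot n x x * dot n z z); [nra|].
    field_simplify; nra. }
  unfold phi; rewrite sin_acos_sq, Hc2; [reflexivity|].
  rewrite <- Hc2 in Hle; nra.
Qed.

Lemma norm_z_sin_phi_sq n x z :
  ~ vzero n x -> ~ vzero n z ->
  (norm n z * sin (phi n x z)) ^ 2 = dot n z z - dot n x z ^ 2 / dot n x x.
Proof.
  intros Hx Hz; pose proof (dot_gt0 n x Hx); pose proof (dot_gt0 n z Hz).
  rewrite Rpow_mult_distr, norm_sq, sin_phi_sq by assumption.
  field; lra.
Qed.

Lemma norm_evec n x z :
  ~ vzero n x -> ~ vzero n z ->
  norm (n * n) (evec n x z)
  = norm n z ^ 2
    * sqrt ((rho n x z ^ 2 - 1) ^ 2 + 2 * rho n x z ^ 2 * sin (phi n x z) ^ 2).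
Proof.
  intros Hx Hz; pose proof (dot_gt0 n x Hx); pose proof (dot_gt0 n z Hz).
  rewrite rho_sq, sin_phi_sq, norm_sq by assumption.
  rewrite <- (sqrt_pow2 (dot n z z)) at 1 by lra.
  rewrite <- sqrt_mult_alt by nra.
  unfold norm; rewrite dot_evec_self.
  f_equal; field; lra.
Qed.

Theorem mainTheorem6 (n : nat) (x z : nat -> R)
  (hx : ~ vzero n x) (hz : ~ vzero n z)
  (hxz : exists i j, (i < n)%nat /\ (j < n)%nat /\ outer x x i j <> outer z z i j) :
  (exists m, is_max (fun y => ~ vzero (n * n) (Xop n x y)) (ratio n x z) m) /\
  (forall theta : R, 0 <= theta <= PI / 2 ->
     is_max (fun y => ~ vzero (n * n) (Xop n x y)) (ratio n x z) (cos theta) ->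
     sin theta = (norm n z * sin (phi n x z)) ^ 2 / norm (n * n) (evec n x z) /\
     (norm n z * sin (phi n x z)) ^ 2 / norm (n * n) (evec n x z)
       = sin (phi n x z) ^ 2 /
         sqrt ((rho n x z ^ 2 - 1) ^ 2 + 2 * rho n x z ^ 2 * sin (phi n x z) ^ 2)).
Proof.
  pose proof (dot_gt0 n x hx) as Hxx.
  set (a := dot n x z / dot n x x).
  set (w := rejection n x z).
  set (ystar := fun i => (1 - a ^ 2) / 2 * x i - a * w i).
  set (q := vec n (outer w w)).
  assert (Hdec : forall k, evec n x z k = Xop n x ystar k - q k)
    by exact (evec_decomposition n x z a).
  assert (Horth : forall y, dot (n * n) q (Xop n x y) = 0).
  { intros y; unfold q, w; rewrite dot_vec_outer_Xop, dot_sym, dot_rejection_l by lra; ring. }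
  pose proof (evec_nonzero n x z hxz) as He.
  pose proof (is_max_cos_angle_range (n * n) (Xop n x) (evec n x z) q ystar x
                He (Xop_self_nonzero n x hx) Hdec Horth) as Hmax.
  split; [eexists; exact Hmax|].
  intros theta Hth Hcos.
  split.
  - rewrite norm_z_sin_phi_sq, <- dot_rejection_self by (assumption || lra).
    fold w q; rewrite <- norm_vec_outer_self.
    apply sin_of_cos_ratio with (p := norm (n * n) (Xop n x ystar));
      [pose proof PI_RGT_0; lra|apply norm_ge0|apply norm_gt0, He| |].
    + rewrite !norm_sq; apply dot_pythagoras with (1 := Hdec), Horth.
    + exact (is_max_unique _ _ _ _ Hcos Hmax).
  - pose proof (norm_gt0 n z hz); pose proof (norm_gt0 _ _ He) as Hne.
    rewrite norm_evec in * by assumption.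
    rewrite Rpow_mult_distr; field; split; [intros H0; rewrite H0 in Hne|]; nra.
Qed.
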